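(* Let $(X,r)$ be a non-degenerate involutive set-theoretic solution with $X=\{1,\dots,n\}$, $r(i,j)=(\sigma_i(j),\gamma_j(i))$, let $V$ be the vector space with basis $v_1,\dots,v_n$ and $c\in\mathrm{End}(V\otimes V)$ the operator $c(v_i\otimes v_j)=v_{\sigma_i(j)}\otimes v_{\gamma_j(i)}$. Then the algebra $A(c)$ is the quotient of the free algebra $F$ generated by $\{T_i^k: 1\le i,k\le n\}$ by the two-sided ideal $I(c)$ generated by all the elements $$C_{ij}^{kl}=T_{\sigma_i(j)}^{k}T_{\gamma_j(i)}^{l}-T_i^{\sigma_k(l)}T_j^{\gamma_l(k)},$$ and in particular $$C_{\sigma_i(j)\gamma_j(i)}^{kl}=T_i^kT_j^l-T_{\sigma_i(j)}^{\sigma_k(l)}T_{\gamma_j(i)}^{\gamma_l(k)}$$ (where $C_{\sigma_i(j)\gamma_j(i)}^{kl}$ denotes $C_{ab}^{kl}$ with $a=\sigma_i(j)$, $b=\gamma_j(i)$). Furthermore: (i) $C_{\sigma_i(j)\gamma_j(i)}^{\sigma_k(l)\gamma_l(k)}=-C_{ij}^{kl}$; (ii) $C_{ij}^{\sigma_k(l)\gamma_l(k)}=-C_{\sigma_i(j)\gamma_j(i)}^{kl}$; (iii) if $r(i,j)=(i,j)$, then $C_{ij}^{\sigma_k(l)\gamma_l(k)}=\pm C_{ij}^{kl}$; (iv) if $r(k,l)=(k,l)$, then $C_{\sigma_i(j)\gamma_j(i)}^{kl}=\pm C_{ij}^{kl}$; (v) if $r(i,j)=(i,j)$ and $r(k,l)=(k,l)$,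 then $C_{ij}^{kl}=0$; (vi) there are $\binom{n^2}{2}$ elements in the set $\{C_{ij}^{kl}\}/\pm$.
   Context: A set-theoretic solution of the Yang–Baxter equation is $r:X\times X\to X\times X$, $r(x,y)=(\sigma_x(y),\gamma_y(x))$, with $r^{12}r^{23}r^{12}=r^{23}r^{12}r^{23}$; non-degenerate means all $\sigma_x,\gamma_x$ bijective, involutive means $r\circ r=\mathrm{Id}$. FRT construction: for $c\in\mathrm{End}(V\otimes V)$ with coefficients defined by $c(v_i\otimes v_j)=\sum_{p,q}c_{ij}^{pq}v_p\otimes v_q$, the algebra $A(c)$ is defined as the quotient of the free algebra generated by $\{T_i^k:1\le i,k\le n\}$ by the two-sided ideal $I(c)$ generated by all elements $C_{ij}^{kl}=\sum_{p,q}c_{ij}^{pq}T_p^kT_q^l-\sum_{p,q}T_i^pT_j^q\,c_{pq}^{kl}$, with $i,j,k,l$ ranging over $\{1,\dots,n\}$. *)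

From HB Require Import structures.
From mathcomp Require Import all_boot all_order all_algebra.
From mathcomp.multinomials Require Import monalg.

Set Implicit Arguments.
Unset Strict Implicit.
Unset Printing Implicit Defensive.

Import GRing.Theory.
Local Open Scope ring_scope.

Section Solutions.
Variable n : nat.
Notation X := 'I_n.

(* r(x,y) = (sigma_x(y), gamma_y(x)); sigma x = sigma_x, gamma y = gamma_y *)
Definition rmap (sigma gamma : X -> X -> X) (p : X * X) : X * X :=
  (sigma p.1 p.2, gamma p.2 p.1).

Definition r12 sigma gamma (t : X * X * X) : X * X * X :=
  let: (x, y, z) := t in let: (a, b) := rmap sigma gamma (x, y) in (a, b, z).
Definition r23 sigma gamma (t : X * X * X) : X * X * X :=
  let: (x, y, z) := t in let: (a, b) := rmap sigma gamma (y, z) in (x, a, b).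

Definition is_YB_solution sigma gamma : Prop :=
  forall t, r12 sigma gamma (r23 sigma gamma (r12 sigma gamma t))
          = r23 sigma gamma (r12 sigma gamma (r23 sigma gamma t)).

Definition non_degenerate (sigma gamma : X -> X -> X) : Prop :=
  forall x, bijective (sigma x) /\ bijective (gamma x).

Definition involutive_sol sigma gamma : Prop :=
  forall p, rmap sigma gamma (rmap sigma gamma p) = p.
End Solutions.

Section FRT.
Variables (K : fieldType) (n : nat).
Notation X := 'I_n.

(* The free algebra F over K generated by the T_i^k, 1 <= i,k <= n:
   the monoid algebra of the free monoid on the index pairs (i,k). *)
Definition FreeAlg := {malg K[{fmonom (X * X)%type}]}.

Definition Tgen (i k : X) : FreeAlg := << fmu (i, k) >>.

(* Coefficients c_{ij}^{pq} of an endomorphism c of V (x) V in the basis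
   v_p (x) v_q : c(v_i (x) v_j) = sum_{p,q} c_{ij}^{pq} v_p (x) v_q. *)
Definition coefs := X -> X -> X -> X -> K.

Definition FRT_C (c : coefs) (i j k l : X) : FreeAlg :=
  \sum_(p < n) \sum_(q < n) (c i j p q) *: (Tgen p k * Tgen q l)
  - \sum_(p < n) \sum_(q < n) (c p q k l) *: (Tgen i p * Tgen j q).

Definition sol_coefs (sigma gamma : X -> X -> X) : coefs :=
  fun i j p q => ((p == sigma i j) && (q == gamma j i))%:R.

(* The set {C_{ij}^{kl}} taken up to sign, nonzero elements only:
   the set of classes {x, -x} for x ranging over the nonzero C_{ij}^{kl}. *)
Definition sign_classes (C : X -> X -> X -> X -> FreeAlg) :
    {set {set (X * X * (X * X))%type}} :=
  [set [set t : X * X * (X * X) |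
          (C t.1.1 t.1.2 t.2.1 t.2.2 == C s.1.1 s.1.2 s.2.1 s.2.2)
       || (C t.1.1 t.1.2 t.2.1 t.2.2 == - C s.1.1 s.1.2 s.2.1 s.2.2)]
     | s : X * X * (X * X) & C s.1.1 s.1.2 s.2.1 s.2.2 != 0].
End FRT.

(* Put t = ((i,j),(k,l)) and let w((a,b),(c,d)) be the word T_a^c T_b^d, an
   injective map into the monomials of the free algebra.  Then
   C_t = w(r(i,j),(k,l)) - w((i,j),r(k,l)) = m(t) - m(rho t), where rho = r x r
   is an involution (r is) and m t = w(r(i,j),(k,l)) is injective.  Such a
   difference of two monomials vanishes exactly at the fixed points of rho, and
   m(t') - m(rho t') = +-(m(t) - m(rho t)) forces t' to lie in {t, rho t}.  So the
   classes up to sign are the 2-element rho-orbits off the fixed points.  By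
   non-degeneracy r has exactly n fixed points (one (x,y) with sigma_x(y) = x for
   each x), which leaves (n^4 - n^2)/2 = C(n^2, 2) classes.  Identities (i)-(v)
   follow by rewriting with sigma_{sigma_i(j)}(gamma_j(i)) = i and
   gamma_{gamma_j(i)}(sigma_i(j)) = j. *)

From mathcomp Require Import all_boot all_order all_algebra.
From mathcomp.multinomials Require Import monalg.
From mathcomp Require Import zify.
Import GRing.Theory.
Local Open Scope ring_scope.

Set Implicit Arguments.
Unset Strict Implicit.

Section SignClasses.
Variables (U : finType) (V : zmodType) (g : U -> V).

Definition pm_classes : {set {set U}} :=
  [set [set t | (g t == g s) || (g t == - g s)] | s : U & g s != 0].

Lemma pm_classes_partition : partition pm_classes [set s | g s != 0].
Proof.
set D := [set s | g s != 0].
pose R : rel U := fun s t => (g t == g s) || (g t == - g s).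
have R_eqv : {in D & &, equivalence_rel R}.
  move=> x y z _ _ _; split; first by rewrite /R eqxx.
  by rewrite /R => /orP[/eqP->|/eqP->]; rewrite ?opprK // orbC.
suff -> : pm_classes = equivalence_partition R D by exact: equivalence_partitionP.
apply: eq_in_imset => s; rewrite inE => gs_neq0; apply/setP => t.
rewrite !inE -/(R s t); case: (boolP (R s t)) => [Rst|]; last by rewrite andbF.
by case/orP: Rst => /eqP->; rewrite ?oppr_eq0 gs_neq0.
Qed.

Variable rho : U -> U.
Hypothesis g_eq0 : forall u, (g u == 0) = (rho u == u).
Hypothesis g_eq_pm : forall u v, g u != 0 ->
  (g v == g u) || (g v == - g u) = (v \in [set u; rho u]).

Lemma card_pm_classes : (#|pm_classes| * 2 + #|[set u | rho u == u]|)%N = #|U|.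
Proof.
have class2 B : B \in pm_classes -> #|B| = 2%N.
  case/imsetP=> s; rewrite inE => gs_neq0 ->.
  have -> : [set t | (g t == g s) || (g t == - g s)] = [set s; rho s].
    by apply/setP => t; rewrite inE g_eq_pm.
  rewrite cards2.
  by move: gs_neq0; rewrite g_eq0 eq_sym => ->.
rewrite -(cardsC [set s | g s != 0]) (card_partition pm_classes_partition).
rewrite (eq_bigr _ class2) sum_nat_const; congr (_ + _)%N.
by apply: eq_card => u; rewrite !inE negbK g_eq0.
Qed.

End SignClasses.

Section MonomialDifferences.
Variables (R : nzRingType) (M : choiceType) (U : finType).
Variables (m : U -> M) (rho : U -> U).
Hypotheses (m_inj : injective m) (rhoK : involutive rho).

Definition monom_diff (u : U) : {malg R[M]} := << m u >> - << m (rho u) >>.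

Lemma mcoeff_monom_diff u z :
  (monom_diff u)@_(m z) = (u == z)%:R - (rho u == z)%:R.
Proof. by rewrite mcoeffB !mcoeffU !(inj_eq m_inj). Qed.

Lemma monom_diff_rho u : monom_diff (rho u) = - monom_diff u.
Proof. by rewrite /monom_diff rhoK opprB. Qed.

Lemma monom_diff_eq0 u : (monom_diff u == 0) = (rho u == u).
Proof.
apply/eqP/eqP => [diff0|rhou]; last by rewrite /monom_diff rhou subrr.
have := congr1 (mcoeff (m u)) diff0.
rewrite mcoeff_monom_diff mcoeff0 eqxx; case: (rho u =P u) => // _.
by rewrite subr0 => /eqP; rewrite oner_eq0.
Qed.

Lemma monom_diff_eq_pm u v : monom_diff u != 0 ->
  (monom_diff v == monom_diff u) || (monom_diff v == - monom_diff u)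
  = (v \in [set u; rho u]).
Proof.
move=> du_neq0; apply/idP/idP; last first.
  by rewrite !inE => /orP[]/eqP->; rewrite ?monom_diff_rho eqxx ?orbT.
rewrite !inE; apply: contraTT; rewrite !negb_or => /andP[v_neq_u v_neq_rhou].
have dv_u : (monom_diff v)@_(m u) = 0.
  rewrite mcoeff_monom_diff (negbTE v_neq_u) (inv_eq rhoK).
  by rewrite (negbTE v_neq_rhou) subrr.
have du_u : (monom_diff u)@_(m u) = 1.
  move: du_neq0; rewrite monom_diff_eq0 mcoeff_monom_diff eqxx => /negbTE->.
  by rewrite subr0.
by apply/andP; split; apply/negP => /eqP/(congr1 (mcoeff (m u)));
  rewrite ?mcoeffN dv_u du_u => /eqP; rewrite eq_sym ?oppr_eq0 oner_eq0.
Qed.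

End MonomialDifferences.

Lemma eq_bin2 (N c : nat) : (c * 2 + N = N * N)%N -> c = 'C(N, 2).
Proof.
move=> e; rewrite bin2; have -> : (N * N.-1 = c * 2)%N by case: N e => /= [|N]; lia.
by rewrite muln2 half_double.
Qed.

Lemma sum_delta2 (R : nzRingType) (V : lmodType R) (I J : finType)
    (F : I -> J -> V) a b :
  \sum_(p : I) \sum_(q : J) ((p == a) && (q == b))%:R *: F p q = F a b.
Proof.
rewrite (bigD1 a) //= [X in _ + X]big1 => [|p /negbTE p_neq_a]; last first.
  by apply: big1 => q _; rewrite p_neq_a scale0r.
rewrite addr0 (bigD1 b) //= [X in _ + X]big1 => [|q /negbTE q_neq_b]; last first.
  by rewrite q_neq_b andbF scale0r.
by rewrite !eqxx scale1r addr0.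
Qed.

Section InvolutiveSolutions.
Variables (K : fieldType) (n : nat) (sigma gamma : 'I_n -> 'I_n -> 'I_n).
Hypotheses (sol_nd : non_degenerate sigma gamma)
  (sol_inv : involutive_sol sigma gamma).
Local Notation X := 'I_n.
Local Notation r := (rmap sigma gamma).
Local Notation C := (FRT_C (@sol_coefs K n sigma gamma)).
Local Notation T := (@Tgen K n).

Lemma sigmaK i j : sigma (sigma i j) (gamma j i) = i.
Proof. by case: (sol_inv (i, j)). Qed.

Lemma gammaK i j : gamma (gamma j i) (sigma i j) = j.
Proof. by case: (sol_inv (i, j)). Qed.

Lemma FRT_C_sol i j k l :
  C i j k l = T (sigma i j) k * T (gamma j i) l - T i (sigma k l) * T j (gamma l k).
Proof.
rewrite /FRT_C /sol_coefs [X in X - _]sum_delta2; congr (_ - _).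
transitivity (\sum_(p < n) \sum_(q < n)
  ((p == sigma k l) && (q == gamma l k))%:R *: (T i p * T j q)); last first.
  exact: sum_delta2.
apply: eq_bigr => p _; apply: eq_bigr => q _.
have := inv_eq sol_inv (p, q) (k, l); rewrite /rmap !xpair_eqE /= => r_eq.
by rewrite [k == _]eq_sym [l == _]eq_sym r_eq.
Qed.

Lemma FRT_C_sol_rlow i j k l :
  C (sigma i j) (gamma j i) k l
  = T i k * T j l - T (sigma i j) (sigma k l) * T (gamma j i) (gamma l k).
Proof. by rewrite FRT_C_sol sigmaK gammaK. Qed.

Lemma FRT_C_sol_rup i j k l :
  C i j (sigma k l) (gamma l k) = - C (sigma i j) (gamma j i) k l.
Proof. by rewrite FRT_C_sol_rlow FRT_C_sol sigmaK gammaK opprB. Qed.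

Lemma FRT_C_sol_rlow_rup i j k l :
  C (sigma i j) (gamma j i) (sigma k l) (gamma l k) = - C i j k l.
Proof. by rewrite FRT_C_sol_rup sigmaK gammaK. Qed.

Definition Tmonom (t : ((X * X) * (X * X))%type) : {fmonom (X * X)%type} :=
  mmul (fmu (t.1.1, t.2.1)) (fmu (t.1.2, t.2.2)).

Lemma Tmonom_inj : injective Tmonom.
Proof.
move=> [[a b] [c d]] [[a' b'] [c' d']] /(congr1 (@fmonom_val _)).
by rewrite !fmM !fmU => -[-> -> -> ->].
Qed.

Lemma Tgen_mul a b c d : T a c * T b d = << Tmonom ((a, b), (c, d)) >>.
Proof. by rewrite /Tgen malgM_def fgmulUU mulr1. Qed.

Definition rmap2 (t : ((X * X) * (X * X))%type) := (r t.1, r t.2).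

Definition C_monom (t : ((X * X) * (X * X))%type) := Tmonom (r t.1, t.2).

Lemma FRT_C_monom_diff t :
  C t.1.1 t.1.2 t.2.1 t.2.2 = monom_diff K C_monom rmap2 t.
Proof.
case: t => [[i j] [k l]].
by rewrite FRT_C_sol !Tgen_mul /monom_diff /C_monom /rmap2 /= sol_inv.
Qed.

Lemma C_monom_inj : injective C_monom.
Proof.
move=> [p q] [p' q'] /Tmonom_inj eq_monom; congr (_, _).
  exact: (inv_inj sol_inv (congr1 fst eq_monom)).
exact: (congr1 snd eq_monom).
Qed.

Lemma rmap2K : involutive rmap2.
Proof. by move=> [p q]; rewrite /rmap2 /= !sol_inv. Qed.

Lemma rmap_fixed x y : (r (x, y) == (x, y)) = (sigma x y == x).
Proof.
rewrite xpair_eqE /=; apply/andP/eqP => [[/eqP //]|sigma_xy].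
split; first exact/eqP.
have [[sigma_inv sigmaxK _] _] := sol_nd x.
apply/eqP/(can_inj sigmaxK).
by rewrite -{1}sigma_xy sigmaK sigma_xy.
Qed.

Lemma card_rmap_fixed : #|[set p : X * X | r p == p]| = n.
Proof.
have fst_inj : {in [set p : X * X | r p == p] &, injective fst}.
  move=> [x y] [x' y']; rewrite !inE !rmap_fixed /= => /eqP sxy /eqP sxy' xx'.
  subst x'; have [[sigma_inv sigmaxK _] _] := sol_nd x.
  by rewrite -(sigmaxK y) -(sigmaxK y') sxy sxy'.
rewrite -(card_in_imset fst_inj) -[RHS]card_ord -cardsT; apply: eq_card => x.
rewrite in_setT; apply/imsetP.
have [[sigma_inv _ sigma_invK] _] := sol_nd x.
by exists (x, sigma_inv x); rewrite // inE rmap_fixed sigma_invK.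
Qed.

Lemma card_rmap2_fixed : #|[set t | rmap2 t == t]| = (n * n)%N.
Proof.
have := cardsX [set p : X * X | r p == p] [set p : X * X | r p == p].
rewrite card_rmap_fixed => <-; apply: eq_card => -[p q].
by rewrite !inE xpair_eqE.
Qed.

Lemma card_sign_classes_sol : #|sign_classes C| = 'C(n ^ 2, 2).
Proof.
apply: eq_bin2.
pose g t := C t.1.1 t.1.2 t.2.1 t.2.2.
have g_eq0 t : (g t == 0) = (rmap2 t == t).
  by rewrite /g FRT_C_monom_diff (monom_diff_eq0 _ _ C_monom_inj).
have g_eq_pm t t' : g t != 0 ->
    (g t' == g t) || (g t' == - g t) = (t' \in [set t; rmap2 t]).
  by rewrite /g !FRT_C_monom_diff; exact: (monom_diff_eq_pm C_monom_inj rmap2K).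
(* [sign_classes C] unfolds to [pm_classes g]. *)
have := card_pm_classes g_eq0 g_eq_pm.
by rewrite card_rmap2_fixed !card_prod !card_ord.
Qed.

End InvolutiveSolutions.

Theorem lemma3p1 (K : fieldType) (n : nat) (sigma gamma : 'I_n -> 'I_n -> 'I_n) :
  is_YB_solution sigma gamma ->
  non_degenerate sigma gamma ->
  involutive_sol sigma gamma ->
  let C := FRT_C (@sol_coefs K n sigma gamma) in
  let T := @Tgen K n in
  (* the generators of I(c) *)
  (forall i j k l,
     C i j k l = T (sigma i j) k * T (gamma j i) l
                 - T i (sigma k l) * T j (gamma l k)) /\
  (forall i j k l,
     C (sigma i j) (gamma j i) k l
     = T i k * T j l - T (sigma i j) (sigma k l) * T (gamma j i) (gamma l k)) /\
  (* (i) *)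
  (forall i j k l,
     C (sigma i j) (gamma j i) (sigma k l) (gamma l k) = - C i j k l) /\
  (* (ii) *)
  (forall i j k l,
     C i j (sigma k l) (gamma l k) = - C (sigma i j) (gamma j i) k l) /\
  (* (iii) *)
  (forall i j k l, rmap sigma gamma (i, j) = (i, j) ->
     C i j (sigma k l) (gamma l k) = C i j k l \/
     C i j (sigma k l) (gamma l k) = - C i j k l) /\
  (* (iv) *)
  (forall i j k l, rmap sigma gamma (k, l) = (k, l) ->
     C (sigma i j) (gamma j i) k l = C i j k l \/
     C (sigma i j) (gamma j i) k l = - C i j k l) /\
  (* (v) *)
  (forall i j k l, rmap sigma gamma (i, j) = (i, j) ->
     rmap sigma gamma (k, l) = (k, l) -> C i j k l = 0) /\
  (* (vi) *)
  #|sign_classes C| = 'C(n ^ 2, 2).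
Proof.
move=> _ sol_nd sol_inv; cbv zeta.
have C_sol := FRT_C_sol K sol_inv.
have C_rup := FRT_C_sol_rup K sol_inv.
split; first exact: C_sol.
split; first exact: FRT_C_sol_rlow.
split; first exact: FRT_C_sol_rlow_rup.
split; first exact: C_rup.
split.
  by move=> i j k l; rewrite /rmap => -[sij gji]; right; rewrite C_rup sij gji.
split.
  move=> i j k l; rewrite /rmap => -[skl glk]; right.
  by have := C_rup i j k l; rewrite skl glk => ->; rewrite opprK.
split.
  move=> i j k l; rewrite /rmap => -[sij gji] [skl glk].
  by rewrite C_sol sij gji skl glk subrr.
exact: card_sign_classes_sol.
Qed.
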